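(* Let $\mathcal E$ be a length exact category satisfying the Jordan–Hölder property. Then $\mathcal P(\operatorname{simp}\mathcal E)\to\operatorname{Serre}(\mathcal E)$, $\mathcal X\mapsto\langle\mathcal X\rangle_{\mathrm{Serre}}$, is an inclusion-preserving bijection.
   Context: An exact category $\mathcal E$ is an additive full subcategory of an abelian category closed under extensions, with conflations the short exact sequences with all terms in $\mathcal E$ and inflations the first maps of conflations. An admissible subobject of $X$ is an equivalence class of inflations $Y\to X$; an admissible subobject series $0=X_0\le\cdots\le X_n=X$ is proper of length $n$ if all factors $X_i/X_{i-1}$ are nonzero. $X$ is of finite length if the lengths of its proper admissible subobject series are bounded; $\mathcal E$ is length if all objects are of finite length. A simple object is a nonzero object whose only admissible subobjects are $0$ and itself; $\operatorname{simp}\mathcal E$ is the set of their isomorphism classes. A composition series is an admissible subobject series with all factors simple; two series are isomorphic if they have the same length $n$ and there is a permutation $\sigma$ with $X_i/X_{i-1}\cong Y_{\sigma(i)}/Y_{\sigma(i)-1}$. $\mathcal E$ satisfies the Jordan–Hölder property if for each object all its composition series are isomorphic. A Serre subcategory is a full additive subcategory $\mathcal S$ closed under isomorphisms such that for each conflation $0\to X\to Y\to Z\to0$, $Y\in\mathcal S$ iff $X,Z\in\mathcal S$; $\langle\mathcal X\rangle_{\mathrm{Serre}}$ is the smallest one containing $\mathcal X$. *)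

From HB Require Import structures.
From mathcomp Require Import all_boot all_algebra.

Set Implicit Arguments.
Unset Strict Implicit.
Unset Printing Implicit Defensive.

Import GRing.Theory.
Local Open Scope ring_scope.

(* A preadditive category: hom-sets are abelian groups, composition (written in
   diagrammatic order: comp f g = "g after f") is associative, unital, bilinear. *)
Record preadditive := PreAdditive {
  Obj : Type;
  Hom : Obj -> Obj -> zmodType;
  idm : forall X, Hom X X;
  comp : forall X Y Z, Hom X Y -> Hom Y Z -> Hom X Z;
  compA : forall W X Y Z (f : Hom W X) (g : Hom X Y) (h : Hom Y Z),
      comp (comp f g) h = comp f (comp g h);
  comp1m : forall X Y (f : Hom X Y), comp (idm X) f = f;
  compm1 : forall X Y (f : Hom X Y), comp f (idm Y) = f;
  compDl : forall X Y Z (f f' : Hom X Y) (g : Hom Y Z),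
      comp (f + f') g = comp f g + comp f' g;
  compDr : forall X Y Z (f : Hom X Y) (g g' : Hom Y Z),
      comp f (g + g') = comp f g + comp f g'
}.

Arguments Hom {p} _ _.
Arguments idm {p} X.
Arguments comp {p X Y Z} _ _.

Definition is_zero_obj {C : preadditive} (Z : Obj C) : Prop :=
  forall X : Obj C, (forall a b : Hom Z X, a = b) /\ (forall a b : Hom X Z, a = b).

Definition is_iso {C : preadditive} {X Y : Obj C} (f : Hom X Y) : Prop :=
  exists g : Hom Y X, comp f g = idm X /\ comp g f = idm Y.

Definition iso_obj {C : preadditive} (X Y : Obj C) : Prop :=
  exists f : Hom X Y, is_iso f.

Definition is_mono {C : preadditive} {X Y : Obj C} (f : Hom X Y) : Prop :=
  forall (W : Obj C) (a b : Hom W X), comp a f = comp b f -> a = b.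

Definition is_epi {C : preadditive} {X Y : Obj C} (f : Hom X Y) : Prop :=
  forall (W : Obj C) (a b : Hom Y W), comp f a = comp f b -> a = b.

Definition is_kernel {C : preadditive} {X Y K : Obj C} (f : Hom X Y) (k : Hom K X) : Prop :=
  comp k f = 0 /\
  forall (W : Obj C) (h : Hom W X), comp h f = 0 -> exists! u : Hom W K, comp u k = h.

Definition is_cokernel {C : preadditive} {X Y Q : Obj C} (f : Hom X Y) (q : Hom Y Q) : Prop :=
  comp f q = 0 /\
  forall (W : Obj C) (h : Hom Y W), comp f h = 0 -> exists! u : Hom Q W, comp q u = h.

Definition is_biproduct {C : preadditive} {X Y P : Obj C}
  (i1 : Hom X P) (i2 : Hom Y P) (p1 : Hom P X) (p2 : Hom P Y) : Prop :=
  [/\ comp i1 p1 = idm X, comp i2 p2 = idm Y, comp i1 p2 = 0, comp i2 p1 = 0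
    & comp p1 i1 + comp p2 i2 = idm P].

Definition abelian (C : preadditive) : Prop :=
  [/\ (exists Z : Obj C, is_zero_obj Z),
      (forall X Y : Obj C, exists (P : Obj C) (i1 : Hom X P) (i2 : Hom Y P)
          (p1 : Hom P X) (p2 : Hom P Y), is_biproduct i1 i2 p1 p2),
      (forall (X Y : Obj C) (f : Hom X Y), exists (K : Obj C) (k : Hom K X), is_kernel f k),
      (forall (X Y : Obj C) (f : Hom X Y), exists (Q : Obj C) (q : Hom Y Q), is_cokernel f q)
    & ((forall (X Y : Obj C) (f : Hom X Y), is_mono f ->
          exists (Z : Obj C) (g : Hom Y Z), is_kernel g f) /\
       (forall (X Y : Obj C) (f : Hom X Y), is_epi f ->
          exists (W : Obj C) (h : Hom W X), is_cokernel h f))].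

Definition short_exact {C : preadditive} {X Y Z : Obj C} (f : Hom X Y) (g : Hom Y Z) : Prop :=
  is_kernel g f /\ is_cokernel f g.

(* An exact category: a full additive subcategory (given by its class of
   objects E) of the abelian category C, closed under extensions. *)
Definition exact_subcat {C : preadditive} (E : Obj C -> Prop) : Prop :=
  [/\ (exists Z : Obj C, is_zero_obj Z /\ E Z),
      (forall X Y : Obj C, E X -> iso_obj X Y -> E Y)
    & (forall (X Y Z : Obj C) (f : Hom X Y) (g : Hom Y Z),
        short_exact f g -> E X -> E Z -> E Y)].

Definition conflation {C : preadditive} (E : Obj C -> Prop) {X Y Z : Obj C}
  (f : Hom X Y) (g : Hom Y Z) : Prop :=
  [/\ E X, E Y, E Z & short_exact f g].

Definition inflation {C : preadditive} (E : Obj C -> Prop) {X Y : Obj C} (f : Hom X Y) : Prop :=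
  exists (Z : Obj C) (g : Hom Y Z), conflation E f g.

(* An admissible subobject series 0 = X_0 >-> X_1 >-> ... >-> X_n = X of length
   n = slen, each step an inflation; X_0 is a zero object and X_n is
   isomorphic to X.  (Values of sobj/smap beyond n are irrelevant.) *)
Record adm_series {C : preadditive} (E : Obj C -> Prop) (X : Obj C) := AdmSeries {
  slen : nat;
  sobj : nat -> Obj C;
  smap : forall i : nat, Hom (sobj i) (sobj i.+1);
  sobj0 : is_zero_obj (sobj 0);
  sinfl : forall i : nat, (i < slen)%N -> inflation E (smap i);
  stop : iso_obj (sobj slen) X
}.

Arguments slen {C E X} a.
Arguments sobj {C E X} a i.
Arguments smap {C E X} a i.

(* the i-th factor X_{i+1}/X_i (0-based) is nonzero *)
Definition factor_nonzero {C : preadditive} {E : Obj C -> Prop} {X : Obj C}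
  (s : adm_series E X) (i : nat) : Prop :=
  exists (Q : Obj C) (q : Hom (sobj s i.+1) Q), is_cokernel (smap s i) q /\ ~ is_zero_obj Q.

Definition proper_series {C : preadditive} {E : Obj C -> Prop} {X : Obj C}
  (s : adm_series E X) : Prop :=
  forall i : nat, (i < slen s)%N -> factor_nonzero s i.

Definition finite_length {C : preadditive} (E : Obj C -> Prop) (X : Obj C) : Prop :=
  exists N : nat, forall s : adm_series E X, proper_series s -> (slen s <= N)%N.

Definition length_cat {C : preadditive} (E : Obj C -> Prop) : Prop :=
  forall X : Obj C, E X -> finite_length E X.

Definition simple_obj {C : preadditive} (E : Obj C -> Prop) (S : Obj C) : Prop :=
  [/\ E S, ~ is_zero_obj S
    & forall (Y : Obj C) (i : Hom Y S), inflation E i -> is_zero_obj Y \/ is_iso i].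

Definition composition_series {C : preadditive} {E : Obj C -> Prop} {X : Obj C}
  (s : adm_series E X) : Prop :=
  forall i : nat, (i < slen s)%N ->
    exists (Q : Obj C) (q : Hom (sobj s i.+1) Q), is_cokernel (smap s i) q /\ simple_obj E Q.

Definition series_iso {C : preadditive} {E : Obj C -> Prop} {X : Obj C}
  (s t : adm_series E X) : Prop :=
  slen s = slen t /\
  exists sigma : nat -> nat,
    [/\ (forall i, (i < slen s)%N -> (sigma i < slen s)%N),
        (forall i j, (i < slen s)%N -> (j < slen s)%N -> sigma i = sigma j -> i = j)
      & forall i, (i < slen s)%N ->
          exists (Q : Obj C) (q : Hom (sobj s i.+1) Q)
                 (Q' : Obj C) (q' : Hom (sobj t (sigma i).+1) Q'),
            [/\ is_cokernel (smap s i) q, is_cokernel (smap t (sigma i)) q'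
              & iso_obj Q Q']].

Definition jordan_hoelder {C : preadditive} (E : Obj C -> Prop) : Prop :=
  forall X : Obj C, E X -> forall s t : adm_series E X,
    composition_series s -> composition_series t -> series_iso s t.

Definition is_serre {C : preadditive} (E : Obj C -> Prop) (S : Obj C -> Prop) : Prop :=
  [/\ (forall X, S X -> E X),
      (exists Z : Obj C, is_zero_obj Z /\ S Z),
      (forall X Y : Obj C, S X -> iso_obj X Y -> S Y)
    & forall (X Y Z : Obj C) (f : Hom X Y) (g : Hom Y Z),
        conflation E f g -> (S Y <-> S X /\ S Z)].

Definition serre_gen {C : preadditive} (E : Obj C -> Prop) (Xs : Obj C -> Prop) : Obj C -> Prop :=
  fun Y => forall S : Obj C -> Prop, is_serre E S -> (forall Z, Xs Z -> S Z) -> S Y.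

(* A subset of simp E (a set of isomorphism classes of simple objects),
   represented by the isomorphism-closed class of its members. *)
Definition simp_subset {C : preadditive} (E : Obj C -> Prop) (Xs : Obj C -> Prop) : Prop :=
  (forall S, Xs S -> simple_obj E S) /\
  (forall S S', Xs S -> iso_obj S S' -> Xs S').

(* For a set [Xs] of simple objects let [filt Xs] consist of the objects having an
   admissible series with all factors in [Xs].  Given a conflation X >-> Y ->> Z, series of
   X and Z splice to a series of Y (pull the conflation back along the steps of the series
   of Z), so composition series of X and Z give one of Y; by Jordan-Hoelder every
   composition series of Y then has the same factors.  Hence [filt Xs] is a Serre
   subcategory containing [Xs], so it contains <Xs>_Serre, and a simple object of
   <Xs>_Serre, being its own only composition factor, lies in [Xs]: the map is injective.
   A Serre subcategory contains an object iff it contains the factors of one (any) of its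
   composition series, which exist by finite length; so it is generated by its simple
   objects: the map is surjective. *)

From Pilot Require Import Defs.
From mathcomp Require Import all_boot all_algebra zify.
From Stdlib Require Import Classical Compare_dec.

Set Implicit Arguments.
Unset Strict Implicit.
Unset Printing Implicit Defensive.

Import GRing.Theory.

Local Notation Hom := Defs.Hom.
Local Notation comp := Defs.comp.
Local Notation compA := Defs.compA.

Definition iso_closed {C : preadditive} (P : Obj C -> Prop) : Prop :=
  forall X Y : Obj C, P X -> iso_obj X Y -> P Y.

Section Preadditive.
Variable C : preadditive.
Local Open Scope ring_scope.

Lemma comp0m (X Y Z : Obj C) (g : Hom Y Z) : comp (0 : Hom X Y) g = 0.
Proof. by apply: (addrI (comp (0 : Hom X Y) g)); rewrite -compDl !addr0. Qed.

Lemma compm0 (X Y Z : Obj C) (f : Hom X Y) : comp f (0 : Hom Y Z) = 0.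
Proof. by apply: (addrI (comp f (0 : Hom Y Z))); rewrite -compDr !addr0. Qed.

Lemma compNr (X Y Z : Obj C) (f : Hom X Y) (g : Hom Y Z) : comp f (- g) = - comp f g.
Proof. by apply/eqP; rewrite -subr_eq0 opprK -compDr addNr compm0. Qed.

Lemma compBr (X Y Z : Obj C) (f : Hom X Y) (g g' : Hom Y Z) :
  comp f (g - g') = comp f g - comp f g'.
Proof. by rewrite compDr compNr. Qed.

Lemma biproduct_decomp (X Y B T : Obj C) (i1 : Hom X B) (i2 : Hom Y B)
    (p1 : Hom B X) (p2 : Hom B Y) (t : Hom T B) :
  is_biproduct i1 i2 p1 p2 -> t = comp (comp t p1) i1 + comp (comp t p2) i2.
Proof. by case=> _ _ _ _ eid; rewrite !compA -compDr eid compm1. Qed.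

Lemma kernel_mono (X Y K : Obj C) (f : Hom X Y) (k : Hom K X) : is_kernel f k -> is_mono k.
Proof.
move=> [k0 kH] W a b ab.
have akf : comp (comp a k) f = 0 by rewrite compA k0 compm0.
have [u [_ U]] := kH W _ akf.
by rewrite -(U a erefl) (U b (esym ab)).
Qed.

Lemma cokernel_epi (X Y Q : Obj C) (f : Hom X Y) (q : Hom Y Q) : is_cokernel f q -> is_epi q.
Proof.
move=> [q0 qH] W a b ab.
have fqa : comp f (comp q a) = 0 by rewrite -compA q0 comp0m.
have [u [_ U]] := qH W _ fqa.
by rewrite -(U a erefl) (U b (esym ab)).
Qed.

Lemma epi_comp (X Y Z : Obj C) (f : Hom X Y) (g : Hom Y Z) :
  is_epi f -> is_epi g -> is_epi (comp f g).
Proof. by move=> ef eg W a b; rewrite !compA => /ef /eg. Qed.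

Lemma is_iso_idm (X : Obj C) : is_iso (idm X).
Proof. by exists (idm X); rewrite comp1m. Qed.

Lemma is_iso_comp (X Y Z : Obj C) (f : Hom X Y) (g : Hom Y Z) :
  is_iso f -> is_iso g -> is_iso (comp f g).
Proof.
move=> [f' [f1 f2]] [g' [g1 g2]]; exists (comp g' f'); split.
  by rewrite compA -(compA g) g1 comp1m f1.
by rewrite compA -(compA f') f2 comp1m g2.
Qed.

Lemma is_iso_inv (X Y : Obj C) (f : Hom X Y) :
  is_iso f -> exists f' : Hom Y X, [/\ is_iso f', comp f f' = idm X & comp f' f = idm Y].
Proof. by move=> [f' [f1 f2]]; exists f'; split => //; exists f. Qed.

Lemma iso_obj_refl (X : Obj C) : iso_obj X X.
Proof. by exists (idm X); apply: is_iso_idm. Qed.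

Lemma iso_obj_sym (X Y : Obj C) : iso_obj X Y -> iso_obj Y X.
Proof. by move=> [f /is_iso_inv [f' [f'iso _ _]]]; exists f'. Qed.

Lemma iso_obj_trans (X Y Z : Obj C) : iso_obj X Y -> iso_obj Y Z -> iso_obj X Z.
Proof. by move=> [f fiso] [g giso]; exists (comp f g); apply: is_iso_comp. Qed.

Lemma zero_obj_iso_closed : iso_closed (@is_zero_obj C).
Proof.
move=> Z Z' zZ [f [f' [f1 f2]]] X; split=> a b.
  by rewrite -(comp1m a) -(comp1m b) -f2 !compA; congr comp; apply: (zZ X).1.
by rewrite -(compm1 a) -(compm1 b) -f2 -!compA; congr comp; apply: (zZ X).2.
Qed.

Lemma zero_obj_iso (Z Z' : Obj C) : is_zero_obj Z -> is_zero_obj Z' -> iso_obj Z Z'.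
Proof. by move=> zZ zZ'; exists 0, 0; split; [apply: (zZ Z).1 | apply: (zZ' Z').1]. Qed.

Lemma kernel_precomp_iso (X' X Y Z : Obj C) (t : Hom X' X) (f : Hom X Y) (g : Hom Y Z) :
  is_iso t -> is_kernel g f -> is_kernel g (comp t f).
Proof.
move=> [t' [e1 e2]] [k0 kH]; split; first by rewrite compA k0 compm0.
move=> W h hg; have [u [uf U]] := kH W h hg.
exists (comp u t'); split; first by rewrite -compA (compA u) e2 compm1.
move=> v vf; have -> : u = comp v t by apply: U; rewrite compA.
by rewrite compA e1 compm1.
Qed.

Lemma kernel_conj_iso (X Y Y' Z : Obj C) (f : Hom X Y) (g : Hom Y Z)
    (r : Hom Y Y') (r' : Hom Y' Y) :
  comp r r' = idm Y -> comp r' r = idm Y' -> is_kernel g f -> is_kernel (comp r' g) (comp f r).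
Proof.
move=> e1 e2 [k0 kH]; split; first by rewrite compA -(compA r) e1 comp1m k0.
move=> W h hg; have hr'g : comp (comp h r') g = 0 by rewrite compA.
have [u [uf U]] := kH W _ hr'g.
exists u; split; first by rewrite -compA uf compA e2 compm1.
by move=> v vf; apply: U; rewrite -vf !compA e1 compm1.
Qed.

Lemma cokernel_precomp_iso (X' X Y Z : Obj C) (t : Hom X' X) (f : Hom X Y) (g : Hom Y Z) :
  is_iso t -> is_cokernel f g -> is_cokernel (comp t f) g.
Proof.
move=> [t' [_ e2]] [q0 qH]; split; first by rewrite compA q0 compm0.
move=> W h hth; apply: qH.
by rewrite -(comp1m (comp f h)) -e2 compA -(compA t) hth compm0.
Qed.

Lemma cokernel_postcomp_iso (X Y Z Z' : Obj C) (f : Hom X Y) (g : Hom Y Z) (t : Hom Z Z') :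
  is_iso t -> is_cokernel f g -> is_cokernel f (comp g t).
Proof.
move=> [t' [e1 e2]] [q0 qH]; split; first by rewrite -compA q0 comp0m.
move=> W h fh; have [u [gu U]] := qH W h fh.
exists (comp t' u); split; first by rewrite compA -(compA t) e1 comp1m.
move=> v gv; have -> : u = comp t v by apply: U; rewrite -compA.
by rewrite -compA e2 comp1m.
Qed.

Lemma cokernel_conj_iso (X Y Y' Z : Obj C) (f : Hom X Y) (g : Hom Y Z)
    (r : Hom Y Y') (r' : Hom Y' Y) :
  comp r r' = idm Y -> comp r' r = idm Y' -> is_cokernel f g -> is_cokernel (comp f r) (comp r' g).
Proof.
move=> e1 e2 [q0 qH]; split; first by rewrite compA -(compA r) e1 comp1m q0.
move=> W h fh; have frh : comp f (comp r h) = 0 by rewrite -compA.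
have [u [gu U]] := qH W _ frh.
exists u; split; first by rewrite compA gu -compA e2 comp1m.
by move=> v gv; apply: U; rewrite -gv -!compA e1 comp1m.
Qed.

Lemma short_exact_precomp_iso (X' X Y Z : Obj C) (t : Hom X' X) (f : Hom X Y) (g : Hom Y Z) :
  is_iso t -> short_exact f g -> short_exact (comp t f) g.
Proof.
by move=> tiso [fK gC]; split; [apply: kernel_precomp_iso | apply: cokernel_precomp_iso].
Qed.

Lemma short_exact_conj_iso (X Y Y' Z : Obj C) (f : Hom X Y) (g : Hom Y Z)
    (r : Hom Y Y') (r' : Hom Y' Y) :
  comp r r' = idm Y -> comp r' r = idm Y' -> short_exact f g ->
  short_exact (comp f r) (comp r' g).
Proof.
by move=> e1 e2 [fK gC]; split; [apply: kernel_conj_iso | apply: cokernel_conj_iso].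
Qed.

Lemma cokernel_unique (X Y Q Q' : Obj C) (f : Hom X Y) (q : Hom Y Q) (q' : Hom Y Q') :
  is_cokernel f q -> is_cokernel f q' -> exists t : Hom Q Q', is_iso t /\ comp q t = q'.
Proof.
move=> qC q'C; have [[q0 qH] [q0' qH']] := (qC, q'C).
have [t [qt _]] := qH _ q' q0'; have [t' [q't' _]] := qH' _ q q0.
exists t; split=> //; exists t'; split.
  by apply: (cokernel_epi qC); rewrite -compA qt q't' compm1.
by apply: (cokernel_epi q'C); rewrite -compA q't' qt compm1.
Qed.

Lemma cokernel_unique_obj (X Y Q Q' : Obj C) (f : Hom X Y) (q : Hom Y Q) (q' : Hom Y Q') :
  is_cokernel f q -> is_cokernel f q' -> iso_obj Q Q'.
Proof. by move=> qC q'C; have [t [tiso _]] := cokernel_unique qC q'C; exists t. Qed.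

Lemma kernel_to_zero_iso (X Y Z : Obj C) (f : Hom X Y) (g : Hom Y Z) :
  is_zero_obj Z -> is_kernel g f -> is_iso f.
Proof.
move=> zZ fK; have [k0 kH] := fK.
have [u [uf _]] := kH _ (idm Y) ((zZ Y).2 _ _).
exists u; split=> //.
by apply: (kernel_mono fK); rewrite compA uf compm1 comp1m.
Qed.

Lemma epi_cokernel_of_kernel (X Y K : Obj C) (e : Hom X Y) (k : Hom K X) :
  abelian C -> is_epi e -> is_kernel e k -> is_cokernel k e.
Proof.
move=> [_ _ _ _ [_ epi_coker]] eepi [k0 kH]; split=> // W m km.
have [V [h [hC hH]]] := epi_coker _ _ e eepi.
have [u [uk _]] := kH _ h hC.
have hm : comp h m = 0 by rewrite -uk compA km compm0.
have [v [ev _]] := hH _ m hm.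
by exists v; split=> // v' ev'; apply: eepi; rewrite ev ev'.
Qed.

Section Pullback.
Variables (Y W Z B P : Obj C) (g : Hom Y Z) (j : Hom W Z).
Variables (i1 : Hom Y B) (i2 : Hom W B) (p1 : Hom B Y) (p2 : Hom B W) (q : Hom P B).
Hypotheses (bip : is_biproduct i1 i2 p1 p2) (qK : is_kernel (comp p1 g - comp p2 j) q).

Lemma pullback_square : comp (comp q p1) g = comp (comp q p2) j.
Proof. by apply/eqP; rewrite -subr_eq0 !compA -compBr qK.1. Qed.

Lemma pullback_lift (T : Obj C) (u : Hom T Y) (v : Hom T W) :
  comp u g = comp v j -> exists w : Hom T P, comp w (comp q p1) = u /\ comp w (comp q p2) = v.
Proof.
have [e11 e22 e12 e21 _] := bip; move=> uv.
have uve : comp (comp u i1 + comp v i2) (comp p1 g - comp p2 j) = 0.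
  rewrite compDl !compBr !compA -!(compA i1) -!(compA i2).
  by rewrite e11 e22 e12 e21 !comp1m !comp0m !compm0 subr0 sub0r uv subrr.
have [w [wq _]] := qK.2 _ _ uve.
exists w; rewrite -!compA wq !compDl !compA e11 e21 e12 e22 !compm1 !compm0.
by rewrite addr0 add0r.
Qed.

Lemma pullback_hom_eq (T : Obj C) (w w' : Hom T P) :
  comp w (comp q p1) = comp w' (comp q p1) -> comp w (comp q p2) = comp w' (comp q p2) -> w = w'.
Proof.
move=> e1 e2; apply: (kernel_mono qK).
rewrite (biproduct_decomp (comp w q) bip) (biproduct_decomp (comp w' q) bip).
by rewrite !(compA w q) !(compA w' q) e1 e2.
Qed.

Lemma pullback_epi : abelian C -> is_epi g -> is_epi (comp q p2).
Proof.
move=> Cab gepi; have [e11 e22 e12 e21 _] := bip.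
have i1e : comp i1 (comp p1 g - comp p2 j) = g.
  by rewrite compBr -!compA e11 e12 comp1m comp0m subr0.
have eepi : is_epi (comp p1 g - comp p2 j).
  by move=> T v v' ev; apply: gepi; rewrite -i1e !compA ev.
have [_ eH] := epi_cokernel_of_kernel Cab eepi qK.
move=> T u1 u2 bu; apply/eqP; rewrite -subr_eq0; apply/eqP.
have qp2u : comp q (comp p2 (u1 - u2)) = 0 by rewrite !compBr -!compA bu subrr.
have [v [ev _]] := eH _ _ qp2u.
have v0 : v = 0.
  by apply: gepi; rewrite compm0 -i1e compA ev -compA e12 comp0m.
by rewrite -(comp1m (u1 - u2)) -e22 compA -ev v0 !compm0.
Qed.

Lemma pullback_kernel (X : Obj C) (f : Hom X Y) :
  is_kernel g f -> exists a : Hom X P, comp a (comp q p1) = f /\ is_kernel (comp q p2) a.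
Proof.
move=> [f0 fH]; have fj : comp f g = comp (0 : Hom X W) j by rewrite f0 comp0m.
have [a [ap ab]] := pullback_lift fj.
exists a; split=> //; split=> // T t tb.
have tpg : comp (comp t (comp q p1)) g = 0.
  by rewrite compA pullback_square -compA tb comp0m.
have [u [uf U]] := fH _ _ tpg.
exists u; split.
  apply: pullback_hom_eq; first by rewrite compA ap uf.
  by rewrite compA ab compm0 tb.
by move=> v va; apply: U; rewrite -va compA ap.
Qed.

Lemma pullback_kernel_comp (V : Obj C) (k : Hom Z V) :
  is_kernel k j -> is_kernel (comp g k) (comp q p1).
Proof.
move=> [j0 jH]; split; first by rewrite -compA pullback_square compA j0 compm0.
move=> T t tgk; rewrite -compA in tgk.
have [w [wj W1]] := jH _ _ tgk.
have [u [up ub]] := pullback_lift (esym wj).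
exists u; split=> // v vp; apply: pullback_hom_eq; first by rewrite up vp.
rewrite ub; apply: W1; by rewrite compA -pullback_square -compA vp.
Qed.

End Pullback.

End Preadditive.

Section ExactCategory.
Variables (C : preadditive) (E : Obj C -> Prop).
Hypotheses (Cab : abelian C) (Eex : exact_subcat E).

Lemma exact_iso_closed : iso_closed E.
Proof. by case: Eex. Qed.

Lemma inflation_precomp_iso (X' X Y : Obj C) (t : Hom X' X) (f : Hom X Y) :
  is_iso t -> inflation E f -> inflation E (comp t f).
Proof.
move=> tiso [V [g [EX EY EV fg]]]; exists V, g; split=> //.
  by apply: exact_iso_closed EX _; apply: iso_obj_sym; exists t.
exact: short_exact_precomp_iso.
Qed.

Lemma zero_conflation (Z Y : Obj C) :
  is_zero_obj Z -> E Z -> E Y -> conflation E (0%R : Hom Z Y) (idm Y).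
Proof.
move=> zZ EZ EY; split=> //; split; split; rewrite ?comp0m //.
  move=> W h; rewrite compm1 => ->; exists 0%R; split; first by rewrite comp0m.
  by move=> v _; apply: (zZ W).2.
by move=> W h _; exists h; split=> [|v]; rewrite comp1m.
Qed.

Lemma simple_obj_iso_closed : iso_closed (simple_obj E).
Proof.
move=> Q Q' [EQ nzQ Qsimple] [r riso]; have [r' [r'iso e1 e2]] := is_iso_inv riso.
split; first by apply: exact_iso_closed EQ _; exists r.
  by move=> zQ'; apply: nzQ; apply: zero_obj_iso_closed zQ' _; exists r'.
move=> W i [V [g [EW EQ' EV ig]]].
have ir'infl : inflation E (comp i r').
  by exists V, (comp r g); split=> //; apply: short_exact_conj_iso.
case: (Qsimple W _ ir'infl) => [zW | ir'iso]; [by left | right].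
by rewrite -(compm1 i) -e2 -compA; apply: is_iso_comp.
Qed.

Lemma nonsimple_conflation (Y : Obj C) :
  E Y -> ~ is_zero_obj Y -> ~ simple_obj E Y ->
  exists (X Z : Obj C) (f : Hom X Y) (g : Hom Y Z),
    [/\ conflation E f g, ~ is_zero_obj X & ~ is_zero_obj Z].
Proof.
move=> EY nzY nsY.
have [X [f [[Z [g fg]] nzX nfiso]]] :
    exists (X : Obj C) (f : Hom X Y), [/\ inflation E f, ~ is_zero_obj X & ~ is_iso f].
  apply: NNPP => none; apply: nsY; split=> // X f finfl.
  apply: NNPP => neither; apply: none; exists X, f.
  by split=> // => ?; apply: neither; [left | right].
exists X, Z, f, g; split=> // zZ; apply: nfiso.
by case: fg => _ _ _ [fK _]; apply: kernel_to_zero_iso zZ fK.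
Qed.

(* [P] is the pullback of [g] along [j]. *)
Lemma conflation_pullback (X Y Z W V : Obj C) (f : Hom X Y) (g : Hom Y Z)
    (j : Hom W Z) (k : Hom Z V) :
  conflation E f g -> conflation E j k ->
  exists (P : Obj C) (a : Hom X P) (b : Hom P W) (p : Hom P Y),
    conflation E a b /\ conflation E p (comp g k).
Proof.
move=> [EX EY EZ [fK gC]] [EW _ EV [jK kC]].
have [_ biproducts kernels _ _] := Cab.
have [B [i1 [i2 [p1 [p2 bip]]]]] := biproducts Y W.
have [P [q qK]] := kernels _ _ (comp p1 g - comp p2 j)%R.
have [a [_ aK]] := pullback_kernel bip qK fK.
have bepi := pullback_epi bip qK Cab (cokernel_epi gC).
have abC := epi_cokernel_of_kernel Cab bepi aK.
have EP : E P by case: Eex => _ _ ext; apply: (ext _ _ _ a (comp q p2)).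
have gkepi := epi_comp (cokernel_epi gC) (cokernel_epi kC).
have pK := pullback_kernel_comp bip qK jK.
exists P, a, (comp q p2), (comp q p1); split; split=> //; split=> //.
exact: epi_cokernel_of_kernel.
Qed.

(** * Admissible series *)

Definition series_factor (X : Obj C) (s : adm_series E X) (i : nat) (Q : Obj C) : Prop :=
  exists q : Hom (sobj s i.+1) Q, is_cokernel (smap s i) q.

(* Proper series and composition series are exactly [factors_in s (fun Q => ~ is_zero_obj Q)]
   and [factors_in s (simple_obj E)], up to unfolding. *)
Definition factors_in (X : Obj C) (s : adm_series E X) (P : Obj C -> Prop) : Prop :=
  forall i, i < slen s ->
    exists (Q : Obj C) (q : Hom (sobj s i.+1) Q), is_cokernel (smap s i) q /\ P Q.

Lemma series_factor_exists (X : Obj C) (s : adm_series E X) i :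
  i < slen s -> exists Q, series_factor s i Q.
Proof. by move=> lti; have [V [g [_ _ _ [_ gC]]]] := sinfl lti; exists V, g. Qed.

Lemma series_factor_iso (X : Obj C) (s : adm_series E X) i Q Q' :
  series_factor s i Q -> series_factor s i Q' -> iso_obj Q Q'.
Proof. by move=> [q qC] [q' q'C]; apply: cokernel_unique_obj qC q'C. Qed.

Lemma series_factor_iso_closed (X : Obj C) (s : adm_series E X) i :
  iso_closed (series_factor s i).
Proof. by move=> Q Q' [q qC] [t tiso]; exists (comp q t); apply: cokernel_postcomp_iso. Qed.

Lemma factors_inP (X : Obj C) (s : adm_series E X) (P : Obj C -> Prop) :
  iso_closed P ->
  factors_in s P <-> (forall i Q, i < slen s -> series_factor s i Q -> P Q).
Proof.
move=> Piso; split=> [sP i Q lti [q qC] | sP i lti].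
  have [Q' [q' [q'C PQ']]] := sP i lti.
  by apply: Piso PQ' _; apply: cokernel_unique_obj q'C qC.
have [Q [q qC]] := series_factor_exists lti.
by exists Q, q; split=> //; apply: sP lti _; exists q.
Qed.

Lemma factors_in_sub (X : Obj C) (s : adm_series E X) (P P' : Obj C -> Prop) :
  (forall Q, P Q -> P' Q) -> factors_in s P -> factors_in s P'.
Proof.
by move=> PP' sP i lti; have [Q [q [qC PQ]]] := sP i lti; exists Q, q; split; last exact: PP'.
Qed.

Lemma factors_in_and (X : Obj C) (s : adm_series E X) (P P' : Obj C -> Prop) :
  iso_closed P -> factors_in s P -> factors_in s P' -> factors_in s (fun Q => P Q /\ P' Q).
Proof.
move=> Piso sP sP' i lti; have [Q [q [qC P'Q]]] := sP' i lti.
exists Q, q; do 2!split=> //.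
exact: (factors_inP s Piso).1 sP i Q lti (ex_intro _ q qC).
Qed.

Lemma zero_series (Z : Obj C) : is_zero_obj Z -> exists s : adm_series E Z, slen s = 0.
Proof.
move=> zZ.
by unshelve eexists (@AdmSeries _ _ _ 0 (fun=> Z) (fun=> 0%R) zZ _ (iso_obj_refl Z)).
Qed.

Definition series_trunc (X : Obj C) (s : adm_series E X) (k : nat) (lek : k <= slen s) :
    adm_series E (sobj s k) :=
  @AdmSeries C E (sobj s k) k (sobj s) (smap s) (sobj0 s)
    (fun i lti => sinfl (leq_trans lti lek)) (iso_obj_refl _).

Definition series_retarget (X X' : Obj C) (s : adm_series E X) (XX' : iso_obj X X') :
    adm_series E X' :=
  @AdmSeries C E X' (slen s) (sobj s) (smap s) (sobj0 s) (@sinfl _ _ _ s)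
    (iso_obj_trans (stop s) XX').

Definition cast_hom (A A' B B' : Obj C) (eA : A = A') (eB : B = B') (h : Hom A B) : Hom A' B' :=
  match eA in _ = A0, eB in _ = B0 return Hom A0 B0 with erefl, erefl => h end.

Lemma cast_homP (R : forall A B : Obj C, Hom A B -> Prop) (A A' B B' : Obj C)
    (eA : A = A') (eB : B = B') (h : Hom A B) :
  R A B h -> R A' B' (cast_hom eA eB h).
Proof. by case: _ / eA; case: _ / eB. Qed.

Definition snoc_obj (F : nat -> Obj C) (n : nat) (Y : Obj C) (i : nat) : Obj C :=
  if i == n.+1 then Y else F i.

Lemma snoc_obj_lt (F : nat -> Obj C) n Y i : (i < n)%coq_nat -> F i = snoc_obj F n Y i.
Proof. by move/ltP=> ltin; rewrite /snoc_obj ifF //; lia. Qed.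

Lemma snoc_obj_ltS (F : nat -> Obj C) n Y i : (i < n)%coq_nat -> F i.+1 = snoc_obj F n Y i.+1.
Proof. by move/ltP=> ltin; rewrite /snoc_obj ifF //; lia. Qed.

Lemma snoc_obj_eq (F : nat -> Obj C) n Y i : i = n -> F n = snoc_obj F n Y i.
Proof. by move=> ->; rewrite /snoc_obj ifF //; lia. Qed.

Lemma snoc_obj_eqS (F : nat -> Obj C) n Y i : i = n -> Y = snoc_obj F n Y i.+1.
Proof. by move=> ->; rewrite /snoc_obj eqxx. Qed.

Definition snoc_map (F : nat -> Obj C) (m : forall i, Hom (F i) (F i.+1)) (n : nat) (Y : Obj C)
    (h : Hom (F n) Y) (i : nat) : Hom (snoc_obj F n Y i) (snoc_obj F n Y i.+1) :=
  match lt_eq_lt_dec i n with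
  | inleft (left ltin) => cast_hom (@snoc_obj_lt F n Y i ltin) (@snoc_obj_ltS F n Y i ltin) (m i)
  | inleft (right ein) => cast_hom (@snoc_obj_eq F n Y i ein) (@snoc_obj_eqS F n Y i ein) h
  | inright _ => 0%R
  end.

Lemma snoc_map_lt (R : forall A B : Obj C, Hom A B -> Prop) (F : nat -> Obj C)
    (m : forall i, Hom (F i) (F i.+1)) n Y (h : Hom (F n) Y) i :
  i < n -> R _ _ (m i) -> R _ _ (snoc_map m h i).
Proof.
rewrite /snoc_map => ltin Rm; case: lt_eq_lt_dec => [[ltin' | ein] | ltni].
- exact: cast_homP.
- by exfalso; lia.
- by exfalso; move/ltP: ltni; lia.
Qed.

Lemma snoc_map_eq (R : forall A B : Obj C, Hom A B -> Prop) (F : nat -> Obj C)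
    (m : forall i, Hom (F i) (F i.+1)) n Y (h : Hom (F n) Y) :
  R _ _ h -> R _ _ (snoc_map m h n).
Proof.
rewrite /snoc_map => Rh; case: lt_eq_lt_dec => [[ltnn | enn] | ltnn].
- by exfalso; move/ltP: ltnn; lia.
- exact: cast_homP.
- by exfalso; move/ltP: ltnn; lia.
Qed.

Lemma snoc_inflation (X Y : Obj C) (s : adm_series E X) (h : Hom (sobj s (slen s)) Y) :
  inflation E h -> forall i, i < (slen s).+1 -> inflation E (snoc_map (smap s) h i).
Proof.
move=> hinfl i; rewrite ltnS leq_eqVlt => /predU1P [-> | lti].
  exact: (snoc_map_eq (R := fun _ _ x => inflation E x)).
exact: (snoc_map_lt (R := fun _ _ x => inflation E x) _ lti (sinfl lti)).
Qed.

Lemma snoc_obj_top (F : nat -> Obj C) n Y : iso_obj (snoc_obj F n Y n.+1) Y.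
Proof. by rewrite /snoc_obj eqxx; apply: iso_obj_refl. Qed.

Definition series_snoc (X Y : Obj C) (s : adm_series E X) (h : Hom (sobj s (slen s)) Y)
    (hinfl : inflation E h) : adm_series E Y :=
  @AdmSeries C E Y (slen s).+1 (snoc_obj (sobj s) (slen s) Y) (snoc_map (smap s) h)
    (sobj0 s) (snoc_inflation hinfl) (snoc_obj_top _ _ _).

Lemma series_extend (X Y : Obj C) (s : adm_series E X) (h : Hom X Y) :
  inflation E h ->
  exists s' : adm_series E Y, [/\ slen s' = (slen s).+1,
    forall i Q, i < slen s -> series_factor s i Q -> series_factor s' i Q
  & forall Q (q : Hom Y Q), is_cokernel h q -> series_factor s' (slen s) Q].
Proof.
move=> hinfl; have [t tiso] := stop s.
exists (series_snoc (inflation_precomp_iso tiso hinfl)); split=> //.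
  by move=> i Q; apply: (snoc_map_lt (R := fun _ B x => exists q : Hom B Q, is_cokernel x q)).
move=> Q q hq; apply: (snoc_map_eq (R := fun _ B x => exists q : Hom B Q, is_cokernel x q)).
by exists q; apply: cokernel_precomp_iso.
Qed.

Lemma single_series (Y : Obj C) :
  E Y -> exists b : adm_series E Y, slen b = 1 /\ series_factor b 0 Y.
Proof.
move=> EY; have [[Z [zZ EZ]] _ _] := Eex; have [s s0] := zero_series zZ.
have zY := zero_conflation zZ EZ EY; have [_ _ _ [_ idmC]] := zY.
have [b [blen _ btop]] := series_extend s (ex_intro _ _ (ex_intro _ _ zY)).
by exists b; rewrite blen s0; split=> //; rewrite -s0; apply: btop idmC.
Qed.

Lemma factors_in_single (Y : Obj C) (b : adm_series E Y) (P : Obj C -> Prop) :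
  slen b = 1 -> series_factor b 0 Y -> P Y -> factors_in b P.
Proof. by move=> b1 [q qC] PY i; rewrite b1 ltnS leqn0 => /eqP ->; exists Y, q. Qed.

(** * Splicing series along a conflation *)

Definition is_splice (X Y Z : Obj C) (s : adm_series E X) (t : adm_series E Z)
    (c : adm_series E Y) : Prop :=
  [/\ slen c = slen s + slen t,
      forall i Q, i < slen s -> series_factor s i Q -> series_factor c i Q
    & forall j Q, j < slen t -> series_factor t j Q -> series_factor c (slen s + j) Q].

(* Induction on the length of [t]: pulling the conflation back along the last step of [t]
   replaces [Z] by the previous term of [t]; the series of the pullback is then extended
   by the inflation into [Y], whose cokernel is the last factor of [t]. *)
Lemma splice_exists (X Y Z : Obj C) (f : Hom X Y) (g : Hom Y Z) :
  conflation E f g ->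
  forall (s : adm_series E X) (t : adm_series E Z), exists c : adm_series E Y, is_splice s t c.
Proof.
move=> fg s t; move: {2}(slen t) (erefl (slen t)) => m.
elim: m Y Z f g fg t => [|m IH] Y Z f g fg t tm.
  have zZ : is_zero_obj Z by move: (stop t); rewrite tm; apply: zero_obj_iso_closed (sobj0 t).
  have [_ _ _ [fK _]] := fg; have fiso := kernel_to_zero_iso zZ fK.
  by exists (series_retarget s (ex_intro _ f fiso)); split=> //; [rewrite tm addn0 | rewrite tm].
have ltm : m < slen t by rewrite tm.
have [V [v tv]] := sinfl ltm; have [_ _ _ [_ vC]] := tv.
have [rho rhoiso] : iso_obj (sobj t m.+1) Z by rewrite -tm; apply: stop.
have [rho' [_ e1 e2]] := is_iso_inv rhoiso.
have tv' : conflation E (comp (smap t m) rho) (comp rho' v).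
  by case: tv fg => ET _ EV tvex [_ _ EZ _]; split=> //; apply: short_exact_conj_iso.
have [P [a [b [p [ab pgv]]]]] := conflation_pullback fg tv'.
have [c' [c'len c'low c'up]] := IH _ _ a b ab (@series_trunc _ t m (ltnW ltm)) erefl.
rewrite /= in c'len.
have [c [clen clow ctop]] := series_extend c' (ex_intro _ _ (ex_intro _ _ pgv)).
exists c; split; first by rewrite clen c'len tm addnS.
  by move=> i Q lti sQ; apply: clow (c'low _ _ lti sQ); rewrite c'len ltn_addr.
move=> j Q; rewrite tm ltnS leq_eqVlt => /predU1P [-> | ltj] tQ.
  have [_ _ _ [_ pC]] := pgv; have := ctop _ _ pC; rewrite c'len => cV.
  by apply: series_factor_iso_closed cV _; apply: series_factor_iso tQ; exists v.
by apply: clow (c'up _ _ ltj tQ); rewrite c'len ltn_add2l.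
Qed.

Lemma factors_in_splice (X Y Z : Obj C) (s : adm_series E X) (t : adm_series E Z)
    (c : adm_series E Y) (P : Obj C -> Prop) :
  is_splice s t c -> factors_in s P -> factors_in t P -> factors_in c P.
Proof.
move=> [clen clow cup] sP tP i; rewrite clen => lti.
suff [Q [[q qC] PQ]] : exists Q, series_factor c i Q /\ P Q by exists Q, q.
case: (ltnP i (slen s)) => [lts | les].
  by have [Q [q [qC PQ]]] := sP i lts; exists Q; split=> //; apply: clow lts _; exists q.
have ltt : i - slen s < slen t by rewrite ltn_subLR.
have [Q [q [qC PQ]]] := tP _ ltt; exists Q; split=> //.
by rewrite -(subnKC les); apply: cup ltt _; exists q.
Qed.

Lemma factors_in_splice_inv (X Y Z : Obj C) (s : adm_series E X) (t : adm_series E Z)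
    (c : adm_series E Y) (P : Obj C -> Prop) :
  is_splice s t c -> iso_closed P -> factors_in c P -> factors_in s P /\ factors_in t P.
Proof.
move=> [clen clow cup] Piso /(factors_inP c Piso) cP.
split; apply/(factors_inP _ Piso) => i Q lti sQ.
  by apply: (cP i Q); [rewrite clen ltn_addr | apply: clow].
by apply: (cP (slen s + i) Q); [rewrite clen ltn_add2l | apply: cup].
Qed.

Lemma proper_series_splice_length (X Y Z : Obj C) (f : Hom X Y) (g : Hom Y Z) N :
  conflation E f g -> (forall u : adm_series E Y, proper_series u -> slen u <= N) ->
  forall (s : adm_series E X) (t : adm_series E Z),
    proper_series s -> proper_series t -> slen s + slen t <= N.
Proof.
move=> fg HN s t ps pt; have [c cst] := splice_exists fg s t.
have [clen _ _] := cst; rewrite -clen; apply: HN.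
exact: (factors_in_splice (P := fun Q => ~ is_zero_obj Q) cst ps pt).
Qed.

(* Splitting off a nonzero proper admissible subobject lowers the bound on the lengths of
   proper series, since a single nonzero factor can be spliced onto either end. *)
Lemma composition_series_of_bound N (Y : Obj C) :
  E Y -> (forall u : adm_series E Y, proper_series u -> slen u <= N) ->
  exists s : adm_series E Y, composition_series s.
Proof.
elim: N Y => [|N IH] Y EY HN; (have [zY | nzY] := classic (is_zero_obj Y);
  first by have [s s0] := zero_series zY; exists s => i; rewrite s0).
  have [b [b1 bY]] := single_series EY.
  by have := HN b (factors_in_single b1 bY nzY); rewrite b1.
have [sY | nsY] := classic (simple_obj E Y).
  by have [b [b1 bY]] := single_series EY; exists b; apply: factors_in_single b1 bY sY.
have [X [Z [f [g [fg nzX nzZ]]]]] := nonsimple_conflation EY nzY nsY.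
have [EX _ EZ _] := fg.
have [bX [bX1 bXX]] := single_series EX; have [bZ [bZ1 bZZ]] := single_series EZ.
have [s cs] : exists s : adm_series E X, composition_series s.
  apply: IH EX _ => s ps.
  have := proper_series_splice_length fg HN ps (factors_in_single bZ1 bZZ nzZ).
  by rewrite bZ1 addn1.
have [t ct] : exists t : adm_series E Z, composition_series t.
  apply: IH EZ _ => t pt.
  have := proper_series_splice_length fg HN (factors_in_single bX1 bXX nzX) pt.
  by rewrite bX1 add1n.
by have [c cst] := splice_exists fg s t; exists c; apply: factors_in_splice cst cs ct.
Qed.

Hypothesis Elen : length_cat E.

Lemma composition_series_exists (Y : Obj C) :
  E Y -> exists s : adm_series E Y, composition_series s.
Proof. by move=> EY; have [N HN] := Elen EY; apply: composition_series_of_bound EY HN. Qed.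

Hypothesis JH : jordan_hoelder E.

Lemma factors_in_jordan_hoelder (Y : Obj C) (s u : adm_series E Y) (P : Obj C -> Prop) :
  E Y -> iso_closed P -> composition_series s -> composition_series u ->
  factors_in s P -> factors_in u P.
Proof.
move=> EY Piso cs cu /(factors_inP s Piso) sP.
have [ulen [sig [sigb _ sigf]]] := JH EY cu cs.
apply/(factors_inP u Piso) => i Q lti [q qC].
have [Q1 [q1 [Q2 [q2 [q1C q2C Q12]]]]] := sigf i lti.
have PQ2 : P Q2 by apply: (sP (sig i)); [rewrite -ulen; apply: sigb | exists q2].
apply: Piso PQ2 _; apply: iso_obj_trans (iso_obj_sym Q12) _.
exact: cokernel_unique_obj q1C qC.
Qed.

(** * Serre subcategories *)

Lemma serre_zero (S : Obj C -> Prop) (Z : Obj C) : is_serre E S -> is_zero_obj Z -> S Z.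
Proof.
by move=> [_ [Z' [zZ' SZ']] Siso _] zZ; apply: Siso SZ' _; apply: zero_obj_iso.
Qed.

Lemma serre_gen_serre (Xs : Obj C -> Prop) :
  (forall X, Xs X -> E X) -> is_serre E (serre_gen E Xs).
Proof.
have [[Z [zZ EZ]] Eiso Eext] := Eex => XsE; split.
- move=> X; apply; last exact: XsE.
  by split=> // [| X' Y' Z' f g []]; first by exists Z.
- by exists Z; split=> // S Sser _; apply: serre_zero Sser zZ.
- by move=> X Y XS XY S Sser XsS; have [_ _ Siso _] := Sser; apply: Siso (XS S Sser XsS) XY.
move=> X Y Z' f g fg; split=> [YS | [XS ZS] S Sser XsS].
  split=> S Sser XsS; have [_ _ _ Sconf] := Sser;
    by have [] := (Sconf _ _ _ _ _ fg).1 (YS S Sser XsS).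
by have [_ _ _ Sconf] := Sser; apply: (Sconf _ _ _ _ _ fg).2; split; [apply: XS | apply: ZS].
Qed.

Lemma serre_factors_in (S : Obj C -> Prop) (Y : Obj C) (s : adm_series E Y) :
  is_serre E S -> S Y <-> factors_in s S.
Proof.
move=> Sser; have [_ _ Siso Sconf] := Sser.
suff prefix : forall k, k <= slen s -> S (sobj s k) <->
    (forall i, i < k -> exists (Q : Obj C) (q : Hom (sobj s i.+1) Q),
       is_cokernel (smap s i) q /\ S Q).
  split=> [SY | sS]; last exact: Siso ((prefix _ (leqnn _)).2 sS) (stop s).
  by apply: (prefix _ (leqnn _)).1; apply: Siso SY (iso_obj_sym (stop s)).
elim=> [|k IH] ltk; first by split=> // _; apply: serre_zero Sser (sobj0 s).
have [V [v kv]] := sinfl ltk; have [_ _ _ [_ vC]] := kv.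
have {}IH := IH (ltnW ltk); split=> [Sk1 i | Sk].
  have [Sk SV] := (Sconf _ _ _ _ _ kv).1 Sk1.
  rewrite ltnS leq_eqVlt => /predU1P [-> | lti]; first by exists V, v.
  exact: IH.1 Sk i lti.
apply: (Sconf _ _ _ _ _ kv).2; split; first by apply: IH.2 => i lti; apply: Sk; apply: leqW.
have [Q [q [qC SQ]]] := Sk k (ltnSn k).
exact: Siso SQ (cokernel_unique_obj qC vC).
Qed.

Lemma serre_simples_subset (S : Obj C -> Prop) :
  is_serre E S -> simp_subset E (fun Q => S Q /\ simple_obj E Q).
Proof.
move=> [_ _ Siso _]; split=> [Q [] // | Q Q' [SQ sQ] QQ'].
by split; [apply: Siso SQ QQ' | apply: simple_obj_iso_closed sQ QQ'].
Qed.

Lemma serre_generated_by_simples (S : Obj C -> Prop) (Y : Obj C) :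
  is_serre E S -> S Y <-> serre_gen E (fun Q => S Q /\ simple_obj E Q) Y.
Proof.
move=> Sser; have [SE _ Siso _] := Sser; split=> [SY T Tser ST | ]; last first.
  by apply; [exact: Sser | move=> Q []].
have [c cc] := composition_series_exists (SE Y SY).
apply/(serre_factors_in c Tser); apply: factors_in_sub ST _.
by apply: factors_in_and Siso _ cc; apply/serre_factors_in.
Qed.

Definition filt (P : Obj C -> Prop) (Y : Obj C) : Prop :=
  E Y /\ exists s : adm_series E Y, factors_in s P.

Lemma filt_serre (Xs : Obj C -> Prop) : simp_subset E Xs -> is_serre E (filt Xs).
Proof.
move=> [Xsimp Xiso]; split.
- by move=> X [].
- have [[Z [zZ EZ]] _ _] := Eex; have [s s0] := zero_series zZ.
  by exists Z; do 2!split=> //; exists s => i; rewrite s0.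
- move=> X X' [EX [s sX]] XX'; split; first exact: exact_iso_closed EX XX'.
  by exists (series_retarget s XX').
move=> X Y Z f g fg; have [EX EY EZ _] := fg; split=> [[_ [w wX]] | [[_ [s sX]] [_ [t tX]]]].
  have [s cs] := composition_series_exists EX.
  have [t ct] := composition_series_exists EZ.
  have [c cst] := splice_exists fg s t.
  have cw := factors_in_sub Xsimp wX.
  have cX := factors_in_jordan_hoelder EY Xiso cw (factors_in_splice cst cs ct) wX.
  have [sX tX] := factors_in_splice_inv cst Xiso cX.
  by split; split=> //; [exists s | exists t].
by split=> //; have [c cst] := splice_exists fg s t; exists c; apply: factors_in_splice cst sX tX.
Qed.

Lemma serre_gen_filt (Xs : Obj C -> Prop) (Y : Obj C) :
  simp_subset E Xs -> serre_gen E Xs Y -> filt Xs Y.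
Proof.
move=> sXs; apply; first exact: filt_serre.
move=> S XsS; have [ES _ _] := sXs.1 S XsS; have [b [b1 bS]] := single_series ES.
by split=> //; exists b; apply: factors_in_single b1 bS XsS.
Qed.

Lemma serre_gen_simple (Xs : Obj C -> Prop) (S : Obj C) :
  simp_subset E Xs -> simple_obj E S -> serre_gen E Xs S -> Xs S.
Proof.
move=> [Xsimp Xiso] sS /(serre_gen_filt (conj Xsimp Xiso)) [ES [w wX]].
have [b [b1 bS]] := single_series ES.
have cb : composition_series b by apply: factors_in_single b1 bS sS.
have bX := factors_in_jordan_hoelder ES Xiso (factors_in_sub Xsimp wX) cb wX.
have b0 : 0 < slen b by rewrite b1.
exact: (factors_inP b Xiso).1 bX 0 S b0 bS.
Qed.

End ExactCategory.

Lemma serre_gen_monotone (C : preadditive) (E Xs Xs' : Obj C -> Prop) :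
  (forall X, Xs X -> Xs' X) -> forall Y, serre_gen E Xs Y -> serre_gen E Xs' Y.
Proof. by move=> XsXs' Y XsY S Sser Xs'S; apply: XsY Sser _ => X /XsXs'/Xs'S. Qed.

Theorem mainTheorem14 (C : preadditive) (E : Obj C -> Prop) :
  abelian C -> exact_subcat E -> length_cat E -> jordan_hoelder E ->
  [/\ (forall Xs, simp_subset E Xs -> is_serre E (serre_gen E Xs)),
      (forall Xs Xs', simp_subset E Xs -> simp_subset E Xs' ->
        (forall Y, serre_gen E Xs Y <-> serre_gen E Xs' Y) ->
        forall S, Xs S <-> Xs' S),
      (forall S, is_serre E S ->
        exists Xs, simp_subset E Xs /\ (forall Y, S Y <-> serre_gen E Xs Y))
    & forall Xs Xs', simp_subset E Xs -> simp_subset E Xs' ->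
        (forall S, Xs S -> Xs' S) ->
        forall Y, serre_gen E Xs Y -> serre_gen E Xs' Y].
Proof.
move=> Cab Eex Elen JH; split.
- by move=> Xs [Xsimp _]; apply: serre_gen_serre => // X /Xsimp [].
- move=> Xs Xs' sXs sXs' gen S; split=> XsS.
    apply: (serre_gen_simple Cab Eex Elen JH sXs' (sXs.1 S XsS)).
    by apply/gen => T _; apply.
  apply: (serre_gen_simple Cab Eex Elen JH sXs (sXs'.1 S XsS)).
  by apply/gen => T _; apply.
- move=> S Sser; exists (fun Q => S Q /\ simple_obj E Q).
  split=> [| Y]; first exact: serre_simples_subset.
  exact: serre_generated_by_simples Cab Eex Elen _ _ Sser.
- by move=> Xs Xs' _ _; apply: serre_gen_monotone.
Qed.
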